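(* For every instance of problem MR, the makespan $\max_{j\in\mathcal J}C_j$ of any optimal schedule is at most $$t_{\max}=\frac{w_{\max}}{w_{\min}}\left(n\,r_{\max}+n(n+1)\left(\frac{|\mathcal T|\cdot v_{\max}^{\beta}}{E}\right)^{\frac{1}{\beta-1}}\right).$$
   Context: Problem MR. There are jobs $\mathcal J=\{1,\dots,n\}$ and processors $\mathcal P=\{1,\dots,m\}$. Job $j$ has weight $w_j>0$, release date $r_j\ge0$, and a nonempty set of Map tasks and a nonempty set of Reduce tasks, preassigned to processors with at most one task of each job per processor; $T_{i,j}$ is the task of job $j$ on processor $i$, with work $v_{i,j}\ge0$; $\mathcal T$ is the set of all tasks and $|\mathcal T|$ its cardinality. A schedule gives each task a start time and a constant speed $s_{i,j}>0$; the task runs non-preemptively for $v_{i,j}/s_{i,j}$ time units and uses energy $v_{i,j}s_{i,j}^{\beta-1}$, where $\beta>1$ is a fixed constant. Feasibility: each processor runs at most one task at a time; tasks of job $j$ start no earlier than $r_j$; Reduce tasks of job $j$ start only after all Map tasks of job $j$ complete; total energy at most a given budget $E>0$. $C_j$ is the maximum completion time of the tasks of job $j$; the objective is to minimize $\sum_j w_jC_j$. $w_{\min}=\min_j w_j$, $w_{\max}=\max_j w_j$, $r_{\max}=\max_j r_j$, $v_{\max}=\max_{i,j}v_{i,j}$. *)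

From mathcomp Require Import all_boot all_order all_algebra.
From mathcomp Require Import reals exp.
Set Implicit Arguments. Unset Strict Implicit. Unset Printing Implicit Defensive.
Import Order.TTheory GRing.Theory Num.Theory.
Local Open Scope ring_scope.

(* Jobs are 'I_n, processors are 'I_m.
   kind i j = None      : job j has no task on processor i
   kind i j = Some true : T_{i,j} is a Map task
   kind i j = Some false: T_{i,j} is a Reduce task
   (so at most one task of each job per processor).
   A schedule is a pair (S, s) of start times and speeds. *)

Section MR.
Variable R : realType.
Variables n m : nat.
Variable kind : 'I_m -> 'I_n -> option bool.
Variable v : 'I_m -> 'I_n -> R.
Variable w : 'I_n -> R.
Variable r : 'I_n -> R.
Variable beta : R.
Variable E : R.

Definition is_task (i : 'I_m) (j : 'I_n) : bool := kind i j != None.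
Definition is_map (i : 'I_m) (j : 'I_n) : bool := kind i j == Some true.
Definition is_reduce (i : 'I_m) (j : 'I_n) : bool := kind i j == Some false.

Definition completion (S s : 'I_m -> 'I_n -> R) i j : R := S i j + v i j / s i j.

Definition energy (s : 'I_m -> 'I_n -> R) : R :=
  \sum_(ij : 'I_m * 'I_n | is_task ij.1 ij.2) v ij.1 ij.2 * s ij.1 ij.2 `^ (beta - 1).

Definition feasible (S s : 'I_m -> 'I_n -> R) : Prop :=
  [/\ (forall i j, is_task i j -> 0 < s i j),
      (forall i j, is_task i j -> r j <= S i j),
      (forall i j j', j != j' -> is_task i j -> is_task i j' ->
         ~ (exists t, [/\ S i j <= t, t < completion S s i j,
                         S i j' <= t & t < completion S s i j'])),
      (forall i i' j, is_reduce i j -> is_map i' j -> completion S s i' j <= S i j)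
    & energy s <= E].

(* C_j : maximum completion time of the tasks of job j (all completion times
   of a feasible schedule are >= 0, and every job has a task, so 0 is a
   harmless identity element for the max). *)
Definition Cj (S s : 'I_m -> 'I_n -> R) (j : 'I_n) : R :=
  \big[Num.max/0]_(i | is_task i j) completion S s i j.

Definition objective (S s : 'I_m -> 'I_n -> R) : R := \sum_j w j * Cj S s j.

Definition optimal (S s : 'I_m -> 'I_n -> R) : Prop :=
  feasible S s /\ forall S' s', feasible S' s' -> objective S s <= objective S' s'.

Definition makespan (S s : 'I_m -> 'I_n -> R) : R := \big[Num.max/0]_j Cj S s j.

Definition w_max : R := \big[Num.max/0]_j w j.           (* w > 0 *)
Definition w_min : R := \big[Num.min/w_max]_j w j.       (* n > 0 *)
Definition r_max : R := \big[Num.max/0]_j r j.           (* r >= 0 *)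
Definition v_max : R :=                                  (* v >= 0 *)
  \big[Num.max/0]_(ij : 'I_m * 'I_n | is_task ij.1 ij.2) v ij.1 ij.2.
Definition num_tasks : nat := #|[set ij : 'I_m * 'I_n | is_task ij.1 ij.2]|.

Definition t_max : R :=
  w_max / w_min *
  (n%:R * r_max + n%:R * (n%:R + 1) *
     ((num_tasks%:R * v_max `^ beta / E) `^ (1 / (beta - 1)))).

End MR.

From mathcomp Require Import all_boot all_order all_algebra.
From mathcomp Require Import reals exp.
From mathcomp Require Import ring lra zify.
Import Order.TTheory GRing.Theory Num.Theory.
Local Open Scope ring_scope.

(* Optimality is used only through comparison with one explicit feasible
   schedule.  Cut time after [r_max] into slots of length
   [D = (|T| v_max^beta / E)^(1/(beta-1))], run every task at the uniform speed
   [v_max / D] (so each task fits in a slot and the energy is exactly [E]), and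
   put the Map tasks of job [j] in slot [2j] and its Reduce tasks in slot
   [2j+1].  Then [C_j <= r_max + (2j+2) D], so the optimal objective is at most
   [w_max (n r_max + n(n+1) D)], and dividing by [w_min] bounds every [C_j]. *)

Lemma sumr_arith_even (R : comPzRingType) (a D : R) (k : nat) :
  \sum_(j < k) (a + (2 * j + 2)%:R * D) = k%:R * a + k%:R * (k%:R + 1) * D.
Proof.
elim: k => [|k IH]; first by rewrite big_ord0 !mul0r addr0.
rewrite big_ord_recr /= IH -[k.+1]addn1 !natrD; ring.
Qed.

Lemma slots_disjoint (R : realDomainType) (a D t : R) (p q : nat) :
  p != q -> 0 <= D ->
  a + p%:R * D <= t < a + p%:R * D + D ->
  ~~ (a + q%:R * D <= t < a + q%:R * D + D).
Proof.
move=> neq_pq D0 /andP[pt tp]; apply/negP => /andP[qt tq].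
have next_slot x y : (x < y)%N -> x%:R * D + D <= y%:R * D.
  by move=> lt_xy; rewrite -[X in _ + X]mul1r -mulrDl ler_wpM2r // natr1 ler_nat.
by move: neq_pq; rewrite neq_ltn => /orP[/next_slot | /next_slot]; lra.
Qed.

Section SlottedSchedule.
Set Implicit Arguments.
Unset Strict Implicit.

Variable R : realType.
Variables n m : nat.
Variable kind : 'I_m -> 'I_n -> option bool.
Variables (v : 'I_m -> 'I_n -> R) (w r : 'I_n -> R) (beta E : R).
Hypothesis beta_gt1 : 1 < beta.
Hypothesis E_gt0 : 0 < E.
Hypothesis v_ge0 : forall i j, is_task kind i j -> 0 <= v i j.

Local Notation vmax := (v_max kind v).
Local Notation N := (num_tasks kind).

Lemma v_le_vmax i j : is_task kind i j -> v i j <= vmax.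
Proof. by move=> ij; apply: (le_bigmax_cond 0 (fun ij : _ * _ => v ij.1 ij.2) (j := (i, j))). Qed.

Lemma vmax_ge0 : 0 <= vmax.
Proof. exact: bigmax_ge_id. Qed.

Lemma num_tasks_gt0 : 0 < vmax -> (0 < N)%N.
Proof.
move=> vmax_gt0; rewrite lt0n; apply/negP; rewrite cards_eq0 => /eqP no_task.
suff : vmax <= 0 by rewrite leNgt vmax_gt0.
apply: bigmax_le => // ij task_ij.
by have := in_set0 ij; rewrite -no_task inE task_ij.
Qed.

Lemma sum_tasks_const (c : R) :
  \sum_(ij : 'I_m * 'I_n | is_task kind ij.1 ij.2) c = N%:R * c.
Proof.
rewrite (eq_bigl (fun ij => ij \in [set ij : 'I_m * 'I_n | is_task kind ij.1 ij.2])).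
  by rewrite sumr_const mulr_natl.
by move=> ij; rewrite inE.
Qed.

Lemma energy_const_speed_le (c : R) :
  energy kind v beta (fun _ _ => c) <= N%:R * (vmax * c `^ (beta - 1)).
Proof.
rewrite /energy -sum_tasks_const; apply: ler_sum => ij task_ij.
by rewrite ler_wpM2r ?powR_ge0 ?v_le_vmax.
Qed.

Definition slot_length : R := (N%:R * vmax `^ beta / E) `^ (1 / (beta - 1)).

(* For [v_max = 0] every task has zero work and any positive speed will do. *)
Definition uniform_speed : R := if 0 < vmax then vmax / slot_length else 1.

Lemma slot_length_ge0 : 0 <= slot_length.
Proof. exact: powR_ge0. Qed.

Lemma slot_length_gt0 : 0 < vmax -> 0 < slot_length.
Proof.
move=> vmax_gt0; apply: powR_gt0.
by rewrite divr_gt0 // mulr_gt0 ?powR_gt0 // ltr0n num_tasks_gt0.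
Qed.

Lemma slot_length_powR : slot_length `^ (beta - 1) = N%:R * vmax `^ beta / E.
Proof.
rewrite -powRrM mul1r mulVf ?powRr1 ?subr_eq0 ?gt_eqF //.
by rewrite divr_ge0 ?mulr_ge0 ?powR_ge0 // ltW.
Qed.

Lemma uniform_speed_gt0 : 0 < uniform_speed.
Proof. by rewrite /uniform_speed; case: ifP => // vmax_gt0; rewrite divr_gt0 ?slot_length_gt0. Qed.

Lemma uniform_energy_le : energy kind v beta (fun _ _ => uniform_speed) <= E.
Proof.
apply: le_trans (energy_const_speed_le _) _; rewrite /uniform_speed.
have [vmax_gt0|vmax_le0] := ltrP 0 vmax; last first.
  have -> : vmax = 0 by apply/le_anti; rewrite vmax_le0 vmax_ge0.
  by rewrite mul0r mulr0 ltW.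
have D_gt0 := slot_length_gt0 vmax_gt0.
have N_gt0 : (0 : R) < N%:R by rewrite ltr0n num_tasks_gt0.
rewrite powRM ?invr_ge0 ?vmax_ge0 ?slot_length_ge0 // -powR_inv1 ?slot_length_ge0 //.
rewrite -powRrM mulN1r powRN slot_length_powR.
rewrite [vmax * _]mulrA mulr_powRB1 ?vmax_ge0 ?(lt_trans ltr01 beta_gt1) //.
have vmax_pow_gt0 : 0 < vmax `^ beta by apply: powR_gt0.
rewrite [X in X <= _](_ : _ = E) //; field.
by rewrite !gt_eqF.
Qed.

Definition slot (i : 'I_m) (j : 'I_n) : nat := (2 * j + is_reduce kind i j)%N.

Definition slot_start (i : 'I_m) (j : 'I_n) : R := r_max r + (slot i j)%:R * slot_length.

Definition slot_speed (i : 'I_m) (j : 'I_n) : R := uniform_speed.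

Lemma slot_neq i j j' : j != j' -> slot i j != slot i j'.
Proof.
rewrite -(inj_eq val_inj) /slot.
by case: (is_reduce kind i j); case: (is_reduce kind i j') => /=; lia.
Qed.

Lemma slot_lt i j : (slot i j < 2 * j + 2)%N.
Proof. by rewrite /slot; case: (is_reduce kind i j) => /=; lia. Qed.

Lemma task_duration_bounds i j :
  is_task kind i j -> 0 <= v i j / uniform_speed <= slot_length.
Proof.
move=> task_ij; rewrite divr_ge0 ?v_ge0 ?(ltW uniform_speed_gt0) //=.
rewrite /uniform_speed; case: ifP => vmax_gt0.
  rewrite invf_div mulrA ler_pdivrMr // [v i j * _]mulrC ler_wpM2l ?slot_length_ge0 //.
  exact: v_le_vmax.
have -> : v i j = 0 by apply/le_anti; rewrite v_ge0 // (le_trans (v_le_vmax task_ij)) // leNgt vmax_gt0.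
by rewrite mul0r slot_length_ge0.
Qed.

Lemma slotted_completion_bounds i j : is_task kind i j ->
  slot_start i j <= completion v slot_start slot_speed i j <= slot_start i j + slot_length.
Proof.
by move=> /task_duration_bounds /andP[dur_ge0 dur_le]; rewrite /completion lerDl dur_ge0 lerD2l.
Qed.

Lemma r_le_rmax j : r j <= r_max r.
Proof. exact: le_bigmax. Qed.

Lemma rmax_ge0 : 0 <= r_max r.
Proof. exact: bigmax_ge_id. Qed.

Lemma map_task i j : is_map kind i j -> is_task kind i j.
Proof. by rewrite /is_map /is_task => /eqP ->. Qed.

Lemma slotted_feasible : feasible kind v r beta E slot_start slot_speed.
Proof.
split.
- by move=> *; exact: uniform_speed_gt0.
- move=> i j _; apply: le_trans (r_le_rmax j) _.
  by rewrite /slot_start lerDl mulr_ge0 ?slot_length_ge0.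
- move=> i j j' neq_jj' task_ij task_ij' [t [start_j end_j start_j' end_j']].
  move: (slotted_completion_bounds task_ij) (slotted_completion_bounds task_ij').
  move=> /andP[_ compl_j] /andP[_ compl_j'].
  have := @slots_disjoint R (r_max r) slot_length t _ _ (slot_neq i neq_jj') slot_length_ge0.
  rewrite /slot_start in start_j start_j' compl_j compl_j' *.
  by rewrite start_j start_j' (lt_le_trans end_j compl_j) (lt_le_trans end_j' compl_j') => /(_ isT).
- move=> i i' j reduce_ij map_i'j.
  have not_reduce : is_reduce kind i' j = false.
    by move: map_i'j reduce_ij; rewrite /is_map /is_reduce => /eqP ->.
  have /andP[_ compl] := slotted_completion_bounds (map_task map_i'j).
  apply: le_trans compl _; rewrite /slot_start /slot reduce_ij not_reduce addn0 addn1.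
  by rewrite -addrA lerD2l -natr1 mulrDl mul1r.
- exact: uniform_energy_le.
Qed.

Lemma slotted_Cj_le j :
  Cj kind v slot_start slot_speed j <= r_max r + (2 * j + 2)%:R * slot_length.
Proof.
apply: bigmax_le => [|i task_ij].
  by rewrite addr_ge0 ?rmax_ge0 // mulr_ge0 ?slot_length_ge0.
have /andP[_ compl] := slotted_completion_bounds task_ij.
apply: le_trans compl _; rewrite /slot_start -addrA lerD2l.
by rewrite -[X in _ + X]mul1r -mulrDl ler_wpM2r ?slot_length_ge0 // natr1 ler_nat slot_lt.
Qed.

Hypothesis n_gt0 : (0 < n)%N.
Hypothesis w_gt0 : forall j, 0 < w j.

Lemma w_le_wmax j : w j <= w_max w.
Proof. exact: le_bigmax. Qed.

Lemma slotted_objective_le : objective kind v w slot_start slot_speed <=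
  w_max w * (n%:R * r_max r + n%:R * (n%:R + 1) * slot_length).
Proof.
rewrite /objective -sumr_arith_even mulr_sumr; apply: ler_sum => j _.
by apply: ler_pM; [exact: ltW | exact: bigmax_ge_id | exact: w_le_wmax | exact: slotted_Cj_le].
Qed.

Lemma wmin_gt0 : 0 < w_min w.
Proof.
rewrite /w_min; elim/big_ind: _ => [||j _]; last exact: w_gt0.
  exact: lt_le_trans (w_gt0 (Ordinal n_gt0)) (w_le_wmax _).
by move=> x y x_gt0 y_gt0; rewrite lt_min x_gt0.
Qed.

Lemma makespan_le_objective S s :
  makespan kind v S s <= objective kind v w S s / w_min w.
Proof.
have w_Cj_ge0 j : 0 <= w j * Cj kind v S s j by rewrite mulr_ge0 ?bigmax_ge_id // ltW.
apply: bigmax_le => [|j _]; first by rewrite divr_ge0 ?sumr_ge0 ?(ltW wmin_gt0).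
rewrite ler_pdivlMr ?wmin_gt0 //; apply: le_trans (_ : w j * Cj kind v S s j <= _).
  by rewrite mulrC ler_wpM2r ?bigmax_ge_id // /w_min bigmin_le.
by rewrite /objective (bigD1 j) //= lerDl sumr_ge0.
Qed.

End SlottedSchedule.

Theorem proposition1 (R : realType) (n m : nat)
  (kind : 'I_m -> 'I_n -> option bool) (v : 'I_m -> 'I_n -> R)
  (w : 'I_n -> R) (r : 'I_n -> R) (beta E : R) :
  (0 < n)%N -> 1 < beta -> 0 < E ->
  (forall j, 0 < w j) -> (forall j, 0 <= r j) ->
  (forall i j, is_task kind i j -> 0 <= v i j) ->
  (forall j, exists i, is_map kind i j) ->
  (forall j, exists i, is_reduce kind i j) ->
  forall S s : 'I_m -> 'I_n -> R,
    optimal kind v w r beta E S s ->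
    makespan kind v S s <= t_max kind v w r beta E.
Proof.
move=> n_gt0 beta_gt1 E_gt0 w_gt0 _ v_ge0 _ _ S s [_ S_opt].
apply: le_trans (makespan_le_objective kind v n_gt0 w_gt0 S s) _.
rewrite /t_max mulrAC ler_pM2r ?invr_gt0 ?(wmin_gt0 n_gt0 w_gt0) //.
apply: le_trans (S_opt _ _ (slotted_feasible r beta_gt1 E_gt0 v_ge0)) _.
exact: (slotted_objective_le r beta_gt1 E_gt0 v_ge0 w_gt0).
Qed.
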